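(* Let $E$ be an odd exact Courant algebroid over a manifold $M$ of dimension $n$, with scalar product $\langle\cdot,\cdot\rangle$ and anchor $\pi$. The assignment $(\mathcal G,\mathcal F)\mapsto(\mathcal F_1,\mathcal F_2):=(\mathcal F,\mathcal G^{\mathrm{end}}\mathcal F)$ gives an equivalence between $B_n$-generalized almost pseudo-Hermitian structures on $E$ and pairs $(\mathcal F_1,\mathcal F_2)$ of commuting $B_n$-generalized almost complex structures with $U:=\ker\mathcal F_1=\ker\mathcal F_2$ such that the bilinear form $(u,v)\mapsto\langle\mathcal F_1\mathcal F_2u,v\rangle$ on $U^\perp$ is nondegenerate and such that $\pi:\{u\in U^\perp\mid\mathcal F_1u=-\mathcal F_2u\}\to TM$ is an isomorphism when $n$ is even, while $\pi:\{u\in E\mid\mathcal F_1u=-\mathcal F_2u\}\to TM$ is an isomorphism when $n$ is odd.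
   Context: An odd exact Courant algebroid over an $n$-manifold $M$ is a Courant algebroid isomorphic to $TM\oplus T^*M\oplus\mathbb R$ with scalar product $\langle X+\xi+\lambda,Y+\eta+\mu\rangle=\tfrac12(\eta(X)+\xi(Y))+\lambda\mu$, anchor the projection and Dorfman bracket $[X+\xi+\lambda,Y+\eta+\mu]=\mathcal L_XY+\mathcal L_X\eta-i_Yd\xi+2\mu\,d\lambda+i_Xi_YH-2(\mu\,i_XF-\lambda\,i_YF)+X(\mu)-Y(\lambda)+F(X,Y)$ for some closed $2$-form $F$ and $3$-form $H$ with $dH=-F\wedge F$. A generalized metric is a rank $n$ subbundle $E_-\subset E$ on which $\langle\cdot,\cdot\rangle$ is nondegenerate and with $\pi|_{E_-}$ an isomorphism onto $TM$; $E_+:=E_-^\perp$, $\mathcal G^{\mathrm{end}}=\pm\mathrm{Id}$ on $E_\pm$. A $B_n$-generalized almost complex structure is an endomorphism $\mathcal F$ whose $i$-eigenbundle $L\subset E\otimes\mathbb C$ is isotropic of rank $n$ with $L\cap\bar L=0$, whose $-i$-eigenbundle is $\bar L$ and which vanishes on the rank-one bundle $(L\oplus\bar L)^\perp$. A $B_n$-generalized almost pseudo-Hermitian structure is a pair $(\mathcal G,\mathcal F)$ of a generalized metric and a $B_n$-generalized almost complex structure with $\mathcal G^{\mathrm{end}}\mathcal F=\mathcal F\mathcal G^{\mathrm{end}}$. *)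

(* Fiberwise (pointwise) linear-algebra model of an odd exact
   Courant algebroid E = TM + T*M + R at a point of an n-manifold.
   Vectors of a fibre are row vectors 'rV[R]_(N n), N n = 2n+1, coordinates
   ordered (X_1..X_n, xi_1..xi_n, lambda).  Endomorphisms are square matrices
   acting on the right: the endomorphism A applied to u is  u *m A, so the
   composite "A after B" is  B *m A.  Subspaces are represented by the row
   space of a square matrix (mxalgebra). *)
From HB Require Import structures.
From mathcomp Require Import all_boot all_order all_algebra.
From mathcomp Require Import complex.
Set Implicit Arguments.
Unset Strict Implicit.
Unset Printing Implicit Defensive.
Import Order.TTheory GRing.Theory Num.Theory.
Local Open Scope ring_scope.

Section Defs.
Variables (R : rcfType) (n : nat).

Definition N : nat := (n + n).+1.

(* scalar product <X+xi+l, Y+eta+m> = 1/2 (eta(X) + xi(Y)) + l m *)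
Definition Qmx : 'M[R]_N :=
  \matrix_(i < N, j < N)
    (if (((i : nat) < n)%N && ((j : nat) == (i : nat) + n)%N)
        || (((j : nat) < n)%N && ((i : nat) == (j : nat) + n)%N)
     then 2^-1
     else if ((i : nat) == n + n)%N && ((j : nat) == n + n)%N then 1 else 0).

Definition sprod (u v : 'rV[R]_N) : 'M[R]_1 := u *m Qmx *m v^T.

Definition anchor : 'M[R]_(N, n) := \matrix_(i < N, j < n) ((i : nat) == (j : nat))%:R.

Definition perp (S : 'M[R]_N) : 'M[R]_N := kermx (Qmx *m S^T).

Definition nondeg_on (W B : 'M[R]_N) : Prop :=
  forall u : 'rV[R]_N, (u <= W)%MS ->
    (forall v : 'rV[R]_N, (v <= W)%MS -> u *m B *m v^T = 0) -> u = 0.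

(* the restriction of the linear map A : E -> TM to the subspace S is an
   isomorphism onto TM = R^n (injective on S and surjective) *)
Definition iso_on (S : 'M[R]_N) (A : 'M[R]_(N, n)) : Prop :=
  \rank (S *m A) = \rank S /\ row_full (S *m A).

(* generalized metric: rank n subspace E_- on which <.,.> is nondegenerate
   and on which pi is an isomorphism onto TM *)
Definition gen_metric (Em : 'M[R]_N) : Prop :=
  [/\ \rank Em = n, nondeg_on Em Qmx & iso_on Em anchor].

(* E_+ := E_-^perp, and G^end = +Id on E_+, -Id on E_- *)
Definition Gend (Em : 'M[R]_N) : 'M[R]_N :=
  proj_mx (perp Em) Em - proj_mx Em (perp Em).

Definition cplx {m p : nat} (A : 'M[R]_(m, p)) : 'M[R[i]]_(m, p) :=
  map_mx (fun x => x%:C%C) A.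
Definition conjmx {m p : nat} (A : 'M[R[i]]_(m, p)) : 'M[R[i]]_(m, p) :=
  map_mx (@conjc R) A.
Definition iC : R[i] := Complex 0 1.

Definition BnGACS (F : 'M[R]_N) : Prop :=
  let L := eigenspace (cplx F) iC in
  let Lb := conjmx L in
  [/\ L *m cplx Qmx *m L^T = 0,
      \rank L = n,
      (L :&: Lb == (0 : 'M[complex R]_N))%MS,
      (eigenspace (cplx F) (- iC) == Lb)%MS
    & kermx (cplx Qmx *m (L + Lb)%MS^T) *m cplx F = 0
                                  ].

Definition pseudo_hermitian (Em F : 'M[R]_N) : Prop :=
  [/\ gen_metric Em, BnGACS F & F *m Gend Em = Gend Em *m F].

Definition admissible_pair (F1 F2 : 'M[R]_N) : Prop :=
  let U := kermx F1 in
  [/\ BnGACS F1 /\ BnGACS F2,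
      F1 *m F2 = F2 *m F1,
      (kermx F1 == kermx F2)%MS,
      nondeg_on (perp U) (F2 *m F1 *m Qmx)
    & if odd n then iso_on (kermx (F1 + F2)) anchor
      else iso_on (perp U :&: kermx (F1 + F2))%MS anchor].

End Defs.

From Pilot Require Import Defs.
From HB Require Import structures.
From mathcomp Require Import all_boot all_order all_algebra.
From mathcomp Require Import complex zify.
Set Implicit Arguments. Unset Strict Implicit. Unset Printing Implicit Defensive.
Import Order.TTheory GRing.Theory Num.Theory.
Local Open Scope ring_scope.

(* After
   complexification, a B_n-generalized almost complex structure F is the same as a
   real endomorphism which is Q-skew, satisfies F^3 = -F and has rank 2n; its kernel
   U is a line and its image is U^perp.  A generalized metric E_- is the same as the
   Q-symmetric involution G = Gend E_-, with E_- = ker (G + 1).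
   If G commutes with F1 := F, then F2 := F1 G is again such a structure with the
   same kernel, and E_- is F1-stable.  As F1^2 = -1 on E_- :&: im F1, this part has
   even rank, so the line U lies in E_- exactly when n is odd; this identifies E_-
   with ker (F1 + F2), resp. U^perp :&: ker (F1 + F2).  Conversely
   G = - F1 F2 + (-1)^n (1 + F1^2) is the only possible involution: F1 G = F2 fixes
   it on U^perp = im F1, the parity argument fixes it on U, and 1 + F1^2 is the
   projection onto U along U^perp. *)

Section BilinearForms.
Variables (K : fieldType) (m : nat).

Lemma addsmx_mul0 k1 k2 p (A : 'M[K]_(k1, m)) (B : 'M[K]_(k2, m)) (M : 'M[K]_(m, p)) :
  A *m M = 0 -> B *m M = 0 -> (A + B)%MS *m M = 0.
Proof.
by move=> /sub_kermxP hA /sub_kermxP hB; apply/sub_kermxP; rewrite addsmx_sub hA.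
Qed.

Lemma row_full_adds_eq k1 k2 p (A : 'M[K]_(k1, m)) (B : 'M[K]_(k2, m))
    (M1 M2 : 'M[K]_(m, p)) :
  (1%:M <= A + B)%MS -> A *m M1 = A *m M2 -> B *m M1 = B *m M2 -> M1 = M2.
Proof.
rewrite sub1mx => /row_full_inj M_inj hA hB; apply/eqP; rewrite -subr_eq0; apply/eqP.
by apply: M_inj; rewrite mulmx0 addsmx_mul0 // mulmxBr ?hA ?hB subrr.
Qed.

Lemma trmx_bil0 k l (A : 'M[K]_(k, m)) (M : 'M[K]_m) (B : 'M[K]_(l, m)) :
  A *m M *m B^T = 0 -> B *m M^T *m A^T = 0.
Proof. by move=> h; rewrite -[B]trmxK -!trmx_mul mulmxA h trmx0. Qed.

Lemma bil0_rV k l (u : 'M[K]_(k, m)) (B : 'M[K]_m) (W : 'M[K]_(l, m)) :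
  (forall v : 'rV_m, (v <= W)%MS -> u *m B *m v^T = 0) -> u *m B *m W^T = 0.
Proof.
move=> u_orth; apply/eqP; rewrite -trmx_eq0 !trmx_mul trmxK.
apply/eqP/sub_kermxP/rV_subP => v vW; apply/sub_kermxP.
by rewrite mulmxA -[v]trmxK -!trmx_mul mulmxA u_orth ?trmx0.
Qed.

Lemma row_full_bil0 k (S : 'M[K]_(k, m)) (M : 'M[K]_m) :
  (1%:M <= S)%MS -> S *m M *m S^T = 0 -> M = 0.
Proof.
rewrite sub1mx => /row_full_inj S_inj h; apply: (S_inj); apply/eqP.
rewrite mulmx0 -trmx_eq0; apply/eqP/S_inj; rewrite mulmx0 trmx_mul mulmxA.
exact: trmx_bil0.
Qed.

Lemma addsmx_bil0l k1 k2 l (A : 'M[K]_(k1, m)) (B : 'M[K]_(k2, m)) (M : 'M[K]_m)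
    (T : 'M[K]_(l, m)) :
  A *m M *m T^T = 0 -> B *m M *m T^T = 0 -> (A + B)%MS *m M *m T^T = 0.
Proof. by rewrite -!mulmxA; apply: addsmx_mul0. Qed.

Lemma addsmx_bil0r k1 k2 l (A : 'M[K]_(k1, m)) (B : 'M[K]_(k2, m)) (M : 'M[K]_m)
    (T : 'M[K]_(l, m)) :
  T *m M *m A^T = 0 -> T *m M *m B^T = 0 -> T *m M *m (A + B)%MS^T = 0.
Proof.
move=> hA hB; rewrite -[M]trmxK; apply: trmx_bil0.
by apply: addsmx_bil0l; apply: trmx_bil0.
Qed.

Variables (Q : 'M[K]_m) (Q_sym : Q^T = Q) (Q_unit : Q \in unitmx).

(* For Q := Qmx R n, [qperp Q S] and [form_nondeg B W] are, by conversion, the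
   [perp S] and [nondeg_on W B] of Defs. *)
Definition qperp k (S : 'M[K]_(k, m)) : 'M[K]_m := kermx (Q *m S^T).

Definition form_nondeg k (B : 'M[K]_m) (W : 'M[K]_(k, m)) : Prop :=
  forall u : 'rV_m, (u <= W)%MS ->
    (forall v : 'rV_m, (v <= W)%MS -> u *m B *m v^T = 0) -> u = 0.

Lemma bil_sym0 k l (A : 'M[K]_(k, m)) (B : 'M[K]_(l, m)) :
  A *m Q *m B^T = 0 -> B *m Q *m A^T = 0.
Proof. by rewrite -{2}Q_sym; apply: trmx_bil0. Qed.

Lemma sub_qperp k l (u : 'M[K]_(l, m)) (S : 'M[K]_(k, m)) :
  (u <= qperp S)%MS = (u *m Q *m S^T == 0).
Proof. by rewrite -mulmxA; apply/sub_kermxP/eqP. Qed.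

Lemma qperp_bil0 k (S : 'M[K]_(k, m)) : qperp S *m Q *m S^T = 0.
Proof. by apply/eqP; rewrite -sub_qperp. Qed.

Lemma qperpS k l (S : 'M[K]_(k, m)) (T : 'M[K]_(l, m)) :
  (T <= S)%MS -> (qperp S <= qperp T)%MS.
Proof.
by case/submxP=> X ->; rewrite sub_qperp trmx_mul mulmxA qperp_bil0 mul0mx.
Qed.

Lemma mxrank_qperp k (S : 'M[K]_(k, m)) : \rank (qperp S) = (m - \rank S)%N.
Proof.
by rewrite mxrank_ker -mxrank_tr trmx_mul trmxK mxrankMfree // row_free_unit unitmx_tr.
Qed.

Lemma row_full_orth0 k l (x : 'M[K]_(k, m)) (S : 'M[K]_(l, m)) :
  (1%:M <= S)%MS -> x *m Q *m S^T = 0 -> x = 0.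
Proof.
rewrite sub1mx => /row_full_inj S_inj /bil_sym0; rewrite -mulmxA -(mulmx0 _ S).
move/S_inj/(congr1 (mulmx (invmx Q))); rewrite mulmx0 mulmxA mulVmx // mul1mx.
by move/eqP; rewrite trmx_eq0 => /eqP.
Qed.

End BilinearForms.

Lemma eq_oppmx0 (K : numFieldType) m p (X : 'M[K]_(m, p)) : X = - X -> X = 0.
Proof.
move=> X_opp; apply/eqP; have : X *+ 2 == 0 by rewrite mulr2n {1}X_opp addNr.
by rewrite -scaler_nat scalemx_eq0 pnatr_eq0.
Qed.

Definition skew_fstruct (K : fieldType) m (Q F : 'M[K]_m.+1) : Prop :=
  [/\ F *m Q = - (Q *m F^T), F *m F *m F = - F & \rank F = m].

Section SkewFStructure.
Variables (K : numFieldType) (m : nat) (Q : 'M[K]_m.+1).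
Hypotheses (Q_sym : Q^T = Q) (Q_unit : Q \in unitmx).

Section OneStructure.
Variable F : 'M[K]_m.+1.
Hypothesis F_skew : skew_fstruct Q F.

Lemma fstruct_cube : F *m F *m F = - F.
Proof. by case: F_skew. Qed.

Lemma fstruct_sqr_im k (u : 'M[K]_(k, m.+1)) : (u <= F)%MS -> u *m F *m F = - u.
Proof. by case/submxP=> w ->; rewrite -!mulmxA (mulmxA F) fstruct_cube mulmxN. Qed.

Lemma fproj_mul : (1%:M + F *m F) *m F = 0.
Proof. by rewrite mulmxDl mul1mx fstruct_cube addrN. Qed.

Lemma mul_fproj : F *m (1%:M + F *m F) = 0.
Proof. by rewrite mulmxDr mulmx1 mulmxA fstruct_cube addrN. Qed.

Lemma fstruct_full : (1%:M <= F + kermx F)%MS.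
Proof.
have -> : 1%:M = - (F *m F) + (1%:M + F *m F) by rewrite addrCA addNr addr0.
apply: addmx_sub_adds.
  by rewrite eqmx_opp submxMl.
by apply/sub_kermxP; apply: fproj_mul.
Qed.

Lemma fstruct_im_ker0 k (u : 'M[K]_(k, m.+1)) : (u <= F)%MS -> u *m F = 0 -> u = 0.
Proof. by move=> uF uF0; rewrite -[u]opprK -(fstruct_sqr_im uF) uF0 mul0mx oppr0. Qed.

Lemma mxrank_fstruct_ker : \rank (kermx F) = 1%N.
Proof. by case: F_skew => _ _ rF; rewrite mxrank_ker rF subSnn. Qed.

Lemma qperp_fstruct_ker : (qperp Q (kermx F) :=: F)%MS.
Proof.
have F_perp : (F <= qperp Q (kermx F))%MS.
  case: F_skew => skewF _ _.
  by rewrite sub_qperp skewF mulNmx -mulmxA -trmx_mul mulmx_ker trmx0 mulmx0 oppr0.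
apply: eqmx_sym; apply/eqmxP; rewrite -(mxrank_leqif_eq F_perp).2.
by rewrite mxrank_qperp // mxrank_fstruct_ker subn1; case: F_skew => _ _ ->.
Qed.

Lemma fstruct_nondeg : form_nondeg Q F.
Proof.
move=> x xF x_orth; apply: (row_full_orth0 Q_sym Q_unit fstruct_full).
apply: addsmx_bil0r; first exact: bil0_rV.
by apply/eqP; rewrite -sub_qperp qperp_fstruct_ker.
Qed.

End OneStructure.

Section SameKernel.
Variables F1 F2 : 'M[K]_m.+1.
Hypotheses (F1_skew : skew_fstruct Q F1) (F2_skew : skew_fstruct Q F2).
Hypothesis ker_eq : (kermx F1 == kermx F2)%MS.

Lemma fstruct_im_eq : (F1 :=: F2)%MS.
Proof.
apply: eqmx_trans (eqmx_sym (qperp_fstruct_ker F1_skew)) _.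
apply: eqmx_trans (qperp_fstruct_ker F2_skew); apply/eqmxP.
by case/andP: ker_eq => le12 le21; rewrite !qperpS.
Qed.

Lemma fstruct_sqr_eq : F1 *m F1 = F2 *m F2.
Proof.
apply: (row_full_adds_eq (fstruct_full F1_skew)).
  by rewrite !mulmxA (fstruct_sqr_im F1_skew) // (fstruct_sqr_im F2_skew) ?fstruct_im_eq.
have kF2 : kermx F1 *m F2 = 0 by apply/sub_kermxP; rewrite (eqmxP ker_eq).
by rewrite !mulmxA mulmx_ker kF2 !mul0mx.
Qed.

End SameKernel.
End SkewFStructure.

Section Involutions.
Variables (K : numFieldType) (m : nat) (Q : 'M[K]_m).
Hypotheses (Q_sym : Q^T = Q) (Q_unit : Q \in unitmx).

Section FromEigenspaces.
Variables (Sp Sm G : 'M[K]_m).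
Hypotheses (S_full : (1%:M <= Sp + Sm)%MS) (G_Sp : Sp *m G = Sp) (G_Sm : Sm *m G = - Sm).
Hypothesis Sp_Sm : Sp *m Q *m Sm^T = 0.

Lemma eigen_invol : G *m G = 1%:M.
Proof.
apply: (row_full_adds_eq S_full); first by rewrite mulmxA !G_Sp mulmx1.
by rewrite mulmxA G_Sm mulNmx G_Sm opprK mulmx1.
Qed.

Lemma eigen_invol_sym : G *m Q = Q *m G^T.
Proof.
have bilG X Y : X *m (G *m Q - Q *m G^T) *m Y^T =
    (X *m G) *m Q *m Y^T - X *m Q *m (Y *m G)^T.
  by rewrite mulmxBr mulmxBl !mulmxA trmx_mul !mulmxA.
have Sm_Sp : Sm *m Q *m Sp^T = 0 by apply: bil_sym0.
apply/eqP; rewrite -subr_eq0; apply/eqP; apply: (row_full_bil0 S_full).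
apply: addsmx_bil0l; apply: addsmx_bil0r; rewrite bilG ?G_Sp ?G_Sm.
all: by rewrite ?linearN /= ?mulmxN ?mulNmx ?Sp_Sm ?Sm_Sp ?oppr0 ?subrr ?addr0.
Qed.

Lemma eigen_invol_ker : (Sm :=: kermx (G + 1%:M))%MS.
Proof.
apply/eqmxP/andP; split.
  by apply/sub_kermxP; rewrite mulmxDr G_Sm mulmx1 addNr.
have /sub_addsmxP [[a b] /= kerE] := submx_trans (submx1 (kermx (G + 1%:M))) S_full.
suff aSp0 : a *m Sp = 0 by rewrite kerE aSp0 add0r submxMl.
apply: eq_oppmx0; apply/eqP; rewrite -subr_eq0 opprK; apply/eqP.
move: (mulmx_ker (G + 1%:M)); rewrite kerE mulmxDr mulmx1 mulmxDl -!mulmxA G_Sp G_Sm.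
by rewrite mulmxN addrACA addNr addr0.
Qed.

End FromEigenspaces.

Section Involution.
Variables (G Em : 'M[K]_m).
Hypotheses (G_invol : G *m G = 1%:M) (G_sym : G *m Q = Q *m G^T).
Hypothesis Em_ker : (Em :=: kermx (G + 1%:M))%MS.
Local Notation Ep := (kermx (G - 1%:M)).

Lemma invol_Em : Em *m G = - Em.
Proof.
have /sub_kermxP : (Em <= kermx (G + 1%:M))%MS by rewrite Em_ker.
by rewrite mulmxDr mulmx1 => /eqP; rewrite addr_eq0 => /eqP.
Qed.

Lemma invol_Ep : Ep *m G = Ep.
Proof.
by move: (mulmx_ker (G - 1%:M)); rewrite mulmxBr mulmx1 => /eqP; rewrite subr_eq0 => /eqP.
Qed.

Lemma invol_full : (1%:M <= Ep + Em)%MS.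
Proof.
have halves : 1%:M = 2^-1 *: (1%:M + G) + 2^-1 *: (1%:M - G) :> 'M[K]_m.
  rewrite -scalerDr addrACA subrr addr0 -mulr2n -scaler_nat scalerA.
  by rewrite mulVf ?scale1r // pnatr_eq0.
rewrite {1}halves; apply: addmx_sub_adds; rewrite scalemx_sub //.
  by apply/sub_kermxP; rewrite mulmxBr mulmxDl mul1mx G_invol !mulmx1 [G + _]addrC subrr.
rewrite Em_ker; apply/sub_kermxP.
by rewrite mulmxDr mulmxBl mul1mx G_invol !mulmx1; apply/eqP; rewrite addr_eq0 opprB.
Qed.

Lemma invol_orth : Ep *m Q *m Em^T = 0.
Proof.
apply: eq_oppmx0; rewrite -{1}invol_Ep -(mulmxA Ep) G_sym mulmxA -(mulmxA _ G^T).
by rewrite -trmx_mul invol_Em linearN /= mulmxN.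
Qed.

Lemma invol_nondeg : form_nondeg Q Em.
Proof.
move=> u uEm u_orth; apply: (row_full_orth0 Q_sym Q_unit invol_full).
apply: addsmx_bil0r; last exact: bil0_rV.
by case/submxP: uEm => a ->; rewrite -!mulmxA (mulmxA Em) (bil_sym0 Q_sym invol_orth) mulmx0.
Qed.

Lemma invol_perp : (qperp Q Em :=: Ep)%MS.
Proof.
have Ep_Em0 : (Ep :&: Em)%MS = 0.
  apply/eqP; rewrite -submx0; apply/rV_subP => v; rewrite sub_capmx => /andP[vEp vEm].
  have vG : v *m G = v by case/submxP: vEp => a ->; rewrite -mulmxA invol_Ep.
  have vGN : v *m G = - v by case/submxP: vEm => a ->; rewrite -!mulmxA invol_Em mulmxN.
  by rewrite (eq_oppmx0 (etrans (esym vG) vGN)) sub0mx.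
have Ep_perp : (Ep <= qperp Q Em)%MS by rewrite sub_qperp invol_orth.
apply: eqmx_sym; apply/eqmxP; rewrite -(mxrank_leqif_eq Ep_perp).2 mxrank_qperp //.
move: invol_full; rewrite sub1mx /row_full mxrank_disjoint_sum // => /eqP rk.
by apply/eqP; lia.
Qed.

End Involution.
End Involutions.

Lemma even_mxrank_sqrN1 (R : realFieldType) m (S M : 'M[R]_m) :
  (S *m M <= S)%MS -> S *m M *m M = - S -> ~~ odd (\rank S).
Proof.
move=> SM SMM; set B := row_base S.
have /submxP [X BX] : (B *m M <= B)%MS by rewrite (eqmxMr M (eq_row_base S)) !eq_row_base.
have BMM : B *m M *m M = - B.
  have /submxP [Y ->] : (B <= S)%MS by rewrite eq_row_base.
  by rewrite -!mulmxA (mulmxA S) SMM mulmxN.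
have XX : X *m X = - 1%:M.
  apply: (row_free_inj (row_base_free S)).
  by rewrite -mulmxA -BX mulmxA -BX BMM mulNmx mul1mx.
apply/negP => odd_rk.
have := congr1 determinant XX; rewrite det_mulmx -scaleN1r detZ det1 mulr1.
rewrite -signr_odd odd_rk expr1 => detXX.
by have := sqr_ge0 (\det X); rewrite expr2 detXX ler0N1.
Qed.

Section ScalarProduct.
Variables (R : rcfType) (n : nat).
Local Notation N := (N n).
Local Notation Q := (Qmx R n).

Definition dual_index (i : nat) : nat :=
  if (i < n)%N then (i + n)%N else if (i < n + n)%N then (i - n)%N else i.

Lemma QmxE (i j : 'I_N) :
  Q i j = if (j : nat) == dual_index i then (if (i : nat) == n + n then 1 else 2^-1)
           else 0.
Proof.
have i_lt : (i < (n + n).+1)%N := ltn_ord i.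
rewrite mxE.
have -> : ((((i : nat) < n) && ((j : nat) == i + n))
          || (((j : nat) < n) && ((i : nat) == j + n))
    = ((j : nat) == dual_index i) && ((i : nat) != n + n))%N.
  by rewrite /dual_index; case: ifP => ?; [|case: ifP => ?]; apply/idP/idP; lia.
have -> : (((i : nat) == n + n) && ((j : nat) == n + n)
    = ((j : nat) == dual_index i) && ((i : nat) == n + n))%N.
  by rewrite /dual_index; case: ifP => ?; [|case: ifP => ?]; apply/idP/idP; lia.
by case: eqP => //= _; case: eqP.
Qed.

Lemma dual_index_lt (i : nat) : (i < (n + n).+1)%N -> (dual_index i < (n + n).+1)%N.
Proof. by rewrite /dual_index; case: ifP => ?; [|case: ifP => ?]; lia. Qed.

Lemma dual_indexK (i : nat) : (i < (n + n).+1)%N -> dual_index (dual_index i) = i.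
Proof.
move=> i_lt; rewrite {2}/dual_index; case: ifP => ?; [|case: ifP => ?].
all: by rewrite /dual_index; (do ! case: ifP => ?); lia.
Qed.

Lemma dual_index_top (i : nat) : (i < (n + n).+1)%N ->
  (dual_index i == n + n)%N = (i == n + n)%N.
Proof. by rewrite /dual_index => ?; case: ifP => ?; [|case: ifP => ?]; apply/idP/idP; lia. Qed.

Lemma trmx_Qmx : Q^T = Q.
Proof.
apply/matrixP => i j; have i_lt : (i < (n + n).+1)%N := ltn_ord i.
have j_lt : (j < (n + n).+1)%N := ltn_ord j.
rewrite mxE !QmxE.
have -> : ((i : nat) == dual_index j) = ((j : nat) == dual_index i).
  by apply/eqP/eqP => ->; rewrite dual_indexK // dual_index_lt.
by case: eqP => // ->; rewrite dual_index_top.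
Qed.

Definition Qmx_inv : 'M[R]_N := \matrix_(i < N, j < N)
  (if (j : nat) == dual_index i then (if (i : nat) == n + n then 1 else 2) else 0).

Lemma mulmx_Qmx_inv : Q *m Qmx_inv = 1%:M.
Proof.
apply/matrixP => i j; have i_lt : (i < (n + n).+1)%N := ltn_ord i.
pose i' : 'I_N := inord (dual_index i).
have i'E : (i' : nat) = dual_index i by rewrite inordK // dual_index_lt.
rewrite !mxE (bigD1 i') //= big1 ?addr0; last first.
  move=> k k_i'; rewrite QmxE; case: eqP => [k_dual|]; last by rewrite mul0r.
  by move: k_i'; rewrite (_ : k = i') ?eqxx //; apply: val_inj; rewrite /= i'E.
rewrite QmxE i'E eqxx !mxE i'E dual_indexK // dual_index_top //.
have [<-{j}|j_i] := eqVneq i j.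
  by rewrite !eqxx; case: eqP => _; rewrite ?mulr1 ?mulVf ?pnatr_eq0.
have /negbTE -> : (j : nat) != i by rewrite eq_sym.
by rewrite mulr0.
Qed.

Lemma Qmx_unit : Q \in unitmx.
Proof. by case: (mulmx1_unit mulmx_Qmx_inv). Qed.

End ScalarProduct.

Section GeneralizedMetric.
Variables (R : rcfType) (n : nat).
Local Notation Q := (Qmx R n).
Variable Em : 'M[R]_(N n).
Hypothesis Em_nondeg : nondeg_on Em Q.

Lemma perp_capmx0 : (perp Em :&: Em)%MS = 0.
Proof.
apply/eqP; rewrite -submx0; apply/rV_subP => v; rewrite sub_capmx => /andP[v_perp vEm].
rewrite (Em_nondeg vEm) ?sub0mx // => w /submxP [a ->].
by move: v_perp; rewrite sub_qperp => /eqP v_orth; rewrite trmx_mul mulmxA v_orth mul0mx.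
Qed.

Lemma perp_adds_full : (1%:M <= perp Em + Em)%MS.
Proof.
rewrite sub1mx /row_full mxrank_disjoint_sum ?perp_capmx0 //.
by rewrite mxrank_qperp ?Qmx_unit // subnK ?rank_leq_row.
Qed.

Lemma Gend_perp : perp Em *m Gend Em = perp Em.
Proof.
by rewrite /Gend mulmxBr proj_mx_id ?perp_capmx0 // proj_mx_0 ?subr0 // capmxC perp_capmx0.
Qed.

Lemma Gend_Em : Em *m Gend Em = - Em.
Proof.
by rewrite /Gend mulmxBr proj_mx_0 ?perp_capmx0 // proj_mx_id ?sub0r // capmxC perp_capmx0.
Qed.

Lemma Gend_invol : Gend Em *m Gend Em = 1%:M.
Proof. exact: eigen_invol perp_adds_full Gend_perp Gend_Em. Qed.

Lemma Gend_sym : Gend Em *m Q = Q *m (Gend Em)^T.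
Proof.
apply: (eigen_invol_sym (trmx_Qmx R n) perp_adds_full Gend_perp Gend_Em).
exact: qperp_bil0.
Qed.

Lemma Gend_ker : (Em :=: kermx (Gend Em + 1%:M))%MS.
Proof. exact: eigen_invol_ker perp_adds_full Gend_perp Gend_Em. Qed.

End GeneralizedMetric.

Lemma Gend_eigen (R : rcfType) (n : nat) (G Em : 'M[R]_(N n)) :
  G *m G = 1%:M -> G *m Qmx R n = Qmx R n *m G^T -> (Em :=: kermx (G + 1%:M))%MS ->
  nondeg_on Em (Qmx R n) /\ Gend Em = G.
Proof.
move=> G_invol G_sym Em_ker.
have Q_sym := trmx_Qmx R n; have Q_unit := Qmx_unit R n.
have Em_nondeg : nondeg_on Em (Qmx R n) := invol_nondeg Q_sym Q_unit G_invol G_sym Em_ker.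
split=> //; apply: (row_full_adds_eq (perp_adds_full Em_nondeg)).
  rewrite Gend_perp //; have /sub_kermxP : (perp Em <= kermx (G - 1%:M))%MS.
    by rewrite (invol_perp Q_unit G_invol G_sym Em_ker).
  by rewrite mulmxBr mulmx1 => /eqP; rewrite subr_eq0 => /eqP ->.
by rewrite Gend_Em // (invol_Em Em_ker).
Qed.

Section CompatibleMetric.
Variables (R : rcfType) (n : nat).
Local Notation Q := (Qmx R n).
Variables (Em F : 'M[R]_(N n)).
Hypotheses (Em_nondeg : nondeg_on Em Q) (Em_rank : \rank Em = n).
Hypotheses (F_skew : skew_fstruct Q F) (F_Gend : F *m Gend Em = Gend Em *m F).
Local Notation G := (Gend Em).

Lemma sub_Em k (u : 'M[R]_(k, N n)) : (u <= Em)%MS = (u *m (G + 1%:M) == 0).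
Proof. by rewrite (Gend_ker Em_nondeg); apply/sub_kermxP/eqP. Qed.

Lemma Em_mulF k (u : 'M[R]_(k, N n)) : (u <= Em)%MS -> (u *m F <= Em)%MS.
Proof.
have F_G1 : F *m (G + 1%:M) = (G + 1%:M) *m F.
  by rewrite mulmxDr mulmxDl F_Gend mulmx1 mul1mx.
by rewrite !sub_Em -mulmxA F_G1 mulmxA => /eqP ->; rewrite mul0mx.
Qed.

Lemma Em_fsplit : (Em :=: (Em :&: F) + (Em :&: kermx F))%MS.
Proof.
apply/eqmxP/andP; split; last by rewrite addsmx_sub !capmxSl.
have Em_dec : Em = - (Em *m F *m F) + Em *m (1%:M + F *m F).
  by rewrite mulmxDr mulmx1 mulmxA addrCA addNr addr0.
rewrite {1}Em_dec; apply: addmx_sub_adds; rewrite sub_capmx; apply/andP; split.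
- by rewrite !eqmx_opp; do 2 apply: Em_mulF.
- by rewrite eqmx_opp submxMl.
- by rewrite mulmxDr mulmx1 mulmxA; apply: addmx_sub => //; do 2 apply: Em_mulF.
- by apply/sub_kermxP; rewrite -mulmxA (fproj_mul F_skew) mulmx0.
Qed.

Lemma mxrank_Em_cap_fker : \rank (Em :&: kermx F) = odd n.
Proof.
have cap0 : ((Em :&: F) :&: (Em :&: kermx F))%MS = 0.
  apply/eqP; rewrite -submx0; apply/rV_subP => v; rewrite !sub_capmx.
  case/andP=> /andP[_ vF] /andP[_ /sub_kermxP vF0].
  by rewrite (fstruct_im_ker0 F_skew vF vF0) sub0mx.
have rk_sum : n = (\rank (Em :&: F) + \rank (Em :&: kermx F))%N.
  by rewrite -mxrank_disjoint_sum // -Em_fsplit.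
have even_rk : ~~ odd (\rank (Em :&: F)).
  apply: (even_mxrank_sqrN1 (M := F)).
    by rewrite sub_capmx submxMl andbT Em_mulF ?capmxSl.
  by apply: (fstruct_sqr_im F_skew); apply: capmxSr.
have : (\rank (Em :&: kermx F) <= 1)%N.
  by rewrite -(mxrank_fstruct_ker F_skew) mxrankS ?capmxSr.
rewrite [in odd n]rk_sum oddD (negbTE even_rk) /=.
by case: (\rank _) => [|[|]].
Qed.

Lemma fker_sub_Em : odd n -> (kermx F <= Em)%MS.
Proof.
move=> n_odd; have cap_sub : (Em :&: kermx F <= kermx F)%MS by apply: capmxSr.
have : (Em :&: kermx F == kermx F)%MS.
  by rewrite -(mxrank_leqif_eq cap_sub).2 mxrank_Em_cap_fker n_odd (mxrank_fstruct_ker F_skew).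
by move/eqmxP <-; apply: capmxSl.
Qed.

Lemma Em_cap_fker0 : ~~ odd n -> (Em :&: kermx F)%MS = 0.
Proof.
by move=> n_even; apply/eqP; rewrite -mxrank_eq0 mxrank_Em_cap_fker (negbTE n_even).
Qed.

Lemma Em_sub_fim : ~~ odd n -> (Em <= F)%MS.
Proof. by move=> n_even; rewrite Em_fsplit Em_cap_fker0 // addsmx_sub capmxSr sub0mx. Qed.

Lemma Gend_fker : kermx F *m G = (-1) ^+ odd n *: kermx F.
Proof.
have [n_odd|n_even] := boolP (odd n).
  have /submxP [a kerE] := fker_sub_Em n_odd.
  by rewrite expr1 scaleN1r {1}kerE -mulmxA (Gend_Em Em_nondeg) mulmxN -kerE.
rewrite expr0 scale1r; apply/eqP; rewrite -subr_eq0.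
rewrite -[X in _ - X]mulmx1 -mulmxBr -submx0 -(Em_cap_fker0 n_even) sub_capmx.
apply/andP; split.
  rewrite sub_Em -mulmxA mulmxBl mul1mx (mulmxDr G) mulmx1 (Gend_invol Em_nondeg).
  by rewrite [1%:M + _]addrC subrr mulmx0.
apply/sub_kermxP; rewrite -mulmxA mulmxBl mul1mx -F_Gend -[F in _ - F]mulmx1 -mulmxBr.
by rewrite mulmxA mulmx_ker mul0mx.
Qed.

End CompatibleMetric.

Lemma iso_on_eqmx (R : rcfType) (n : nat) (S S' : 'M[R]_(N n)) (A : 'M[R]_(N n, n)) :
  (S :=: S')%MS -> iso_on S A -> iso_on S' A.
Proof.
move=> SS' [rkSA fullSA]; have SA : (S *m A :=: S' *m A)%MS by apply: eqmxMr.
by move: rkSA fullSA; rewrite /row_full SA SS'; split.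
Qed.

Section MetricToPair.
Variables (R : rcfType) (n : nat).
Local Notation Q := (Qmx R n).
Variables (Em F : 'M[R]_(N n)).
Hypotheses (Em_rank : \rank Em = n) (Em_nondeg : nondeg_on Em Q).
Hypothesis Em_iso : iso_on Em (anchor R n).
Hypotheses (F_skew : skew_fstruct Q F) (F_Gend : F *m Gend Em = Gend Em *m F).
Local Notation G := (Gend Em).

Lemma fstruct_mulGend : skew_fstruct Q (F *m G).
Proof.
have G_unit : G \in unitmx by case: (mulmx1_unit (Gend_invol Em_nondeg)).
case: F_skew => F_skewQ F_cube F_rank; split.
- rewrite -mulmxA (Gend_sym Em_nondeg) mulmxA F_skewQ mulNmx -mulmxA -trmx_mul.
  by rewrite -F_Gend.
- have FGFG : F *m G *m (F *m G) = F *m F.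
    by rewrite mulmxA -(mulmxA F G F) -F_Gend mulmxA -mulmxA (Gend_invol Em_nondeg) mulmx1.
  by rewrite FGFG mulmxA F_cube mulNmx.
- by rewrite mxrankMfree ?row_free_unit.
Qed.

Lemma kermx_mulGend : (kermx F == kermx (F *m G))%MS.
Proof.
apply/andP; split; apply/sub_kermxP; first by rewrite mulmxA mulmx_ker mul0mx.
rewrite -[_ *m F]mulmx1 -(Gend_invol Em_nondeg) mulmxA -(mulmxA _ F G).
by rewrite mulmx_ker !mul0mx.
Qed.

Lemma nondeg_mulGend : nondeg_on (perp (kermx F)) (F *m G *m F *m Q).
Proof.
have Q_sym := trmx_Qmx R n; have Q_unit := Qmx_unit R n.
move=> u; rewrite (qperp_fstruct_ker Q_unit F_skew) => uF u_orth.
have uGF : (u *m G <= F)%MS.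
  by case/submxP: uF => a ->; rewrite -mulmxA F_Gend mulmxA submxMl.
have uFGF : u *m (F *m G *m F *m Q) = - (u *m G *m Q).
  by rewrite -(mulmxA F G F) -F_Gend !mulmxA (fstruct_sqr_im F_skew uF) !mulNmx.
suff uG0 : u *m G = 0 by rewrite -[u]mulmx1 -(Gend_invol Em_nondeg) mulmxA uG0 mul0mx.
apply: (fstruct_nondeg Q_sym Q_unit F_skew uGF) => v vF; apply: oppr_inj.
by rewrite oppr0 -mulNmx -uFGF u_orth ?(qperp_fstruct_ker Q_unit F_skew).
Qed.

Lemma iso_mulGend : if odd n then iso_on (kermx (F + F *m G)) (anchor R n)
  else iso_on (perp (kermx F) :&: kermx (F + F *m G))%MS (anchor R n).
Proof.
have Q_unit := Qmx_unit R n.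
have sub_ker k (u : 'M[R]_(k, N n)) : (u <= kermx (F + F *m G))%MS = (u *m F <= Em)%MS.
  have FG1 : F *m (G + 1%:M) = F + F *m G by rewrite mulmxDr mulmx1 addrC.
  by rewrite (sub_Em Em_nondeg) -mulmxA FG1; apply/sub_kermxP/eqP.
have Em_ker : (Em <= kermx (F + F *m G))%MS by rewrite sub_ker Em_mulF.
have Em_im := Em_sub_fim Em_nondeg Em_rank F_skew F_Gend.
case: ifP => n_odd; apply: iso_on_eqmx Em_iso; apply/eqmxP/andP; split=> //.
- set K := kermx _; have K_dec : K = - (K *m F *m F) + K *m (1%:M + F *m F).
    by rewrite mulmxDr mulmx1 mulmxA addrCA addNr addr0.
  rewrite {1}K_dec; apply: addmx_sub.
    by rewrite eqmx_opp Em_mulF // -sub_ker.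
  apply: submx_trans (fker_sub_Em Em_nondeg Em_rank F_skew F_Gend n_odd).
  by apply/sub_kermxP; rewrite -mulmxA (fproj_mul F_skew) mulmx0.
- by rewrite sub_capmx Em_ker (qperp_fstruct_ker Q_unit F_skew) Em_im ?n_odd.
- set C := (_ :&: _)%MS; have := capmxSl (perp (kermx F)) (kermx (F + F *m G)).
  rewrite (qperp_fstruct_ker Q_unit F_skew) -/C => CF.
  rewrite -[C]opprK -(fstruct_sqr_im F_skew CF) eqmx_opp Em_mulF // -sub_ker.
  exact: capmxSr.
Qed.

End MetricToPair.

Section PairToMetric.
Variables (R : rcfType) (n : nat).
Local Notation Q := (Qmx R n).
Variables F1 F2 : 'M[R]_(N n).
Local Notation A := (F1 *m F2).
Local Notation P := (1%:M + F1 *m F1).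

Definition pair_Gend : 'M[R]_(N n) := - A + (-1) ^+ odd n *: P.

Definition pair_Em : 'M[R]_(N n) :=
  if odd n then kermx (F1 + F2) else (perp (kermx F1) :&: kermx (F1 + F2))%MS.

Hypotheses (F1_skew : skew_fstruct Q F1) (F2_skew : skew_fstruct Q F2).
Hypotheses (F_comm : F1 *m F2 = F2 *m F1) (ker_eq : (kermx F1 == kermx F2)%MS).
Local Notation G := pair_Gend.

Lemma F2_sub_F1 : (F2 <= F1)%MS.
Proof. by rewrite (fstruct_im_eq (Qmx_unit R n) F1_skew F2_skew ker_eq). Qed.

Lemma F2_fproj : F2 *m P = 0.
Proof. by rewrite mulmxDr mulmx1 mulmxA (fstruct_sqr_im F1_skew F2_sub_F1) addrN. Qed.

Lemma fproj_idem : P *m P = P.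
Proof. by rewrite {1}mulmxDl mul1mx -mulmxA (mul_fproj F1_skew) mulmx0 addr0. Qed.

Lemma mulF12_sqr : A *m A = - (F1 *m F1).
Proof.
rewrite {1}F_comm mulmxA -(mulmxA F2 F1 F1) mulmxA (fstruct_sqr_im F1_skew F2_sub_F1).
by rewrite mulNmx (fstruct_sqr_eq (Qmx_unit R n) F1_skew F2_skew ker_eq).
Qed.

Lemma mulF12_fproj : A *m P = 0.
Proof. by rewrite -mulmxA F2_fproj mulmx0. Qed.

Lemma pair_Gend_invol : G *m G = 1%:M.
Proof.
have PA : P *m A = 0 by rewrite mulmxA (fproj_mul F1_skew) mul0mx.
rewrite /pair_Gend mulmxDl !mulmxDr !mulNmx !mulmxN opprK mulF12_sqr.
rewrite -!scalemxAl -!scalemxAr mulF12_fproj PA fproj_idem scalerA -expr2 sqrr_sign scale1r.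
by rewrite !scaler0 oppr0 !addr0 add0r addrCA addNr addr0.
Qed.

Lemma pair_Gend_sym : G *m Q = Q *m G^T.
Proof.
case: F1_skew => F1Q _ _; case: F2_skew => F2Q _ _.
have AQ : A *m Q = Q *m A^T.
  by rewrite -mulmxA F2Q mulmxN mulmxA F1Q mulNmx opprK -mulmxA -trmx_mul F_comm.
have PQ : P *m Q = Q *m P^T.
  rewrite mulmxDl mul1mx linearD /= trmx1 mulmxDr mulmx1 trmx_mul.
  by rewrite -mulmxA F1Q mulmxN mulmxA F1Q mulNmx opprK mulmxA.
rewrite /pair_Gend mulmxDl mulNmx -scalemxAl AQ PQ.
by rewrite [in RHS]linearD /= [in RHS]linearN [in RHS]linearZ /= mulmxDr mulmxN -scalemxAr.
Qed.

Lemma F1_pair_Gend : F1 *m G = F2.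
Proof.
rewrite /pair_Gend mulmxDr mulmxN -scalemxAr (mul_fproj F1_skew) scaler0 addr0.
by rewrite F_comm mulmxA F_comm (fstruct_sqr_im F1_skew F2_sub_F1) opprK.
Qed.

Lemma pair_Gend_F1 : G *m F1 = F2.
Proof.
rewrite /pair_Gend mulmxDl mulNmx -scalemxAl (fproj_mul F1_skew) scaler0 addr0.
by rewrite F_comm (fstruct_sqr_im F1_skew F2_sub_F1) opprK.
Qed.

Lemma fker_pair_Gend : kermx F1 *m G = (-1) ^+ odd n *: kermx F1.
Proof.
rewrite /pair_Gend mulmxDr mulmxN mulmxA mulmx_ker mul0mx oppr0 add0r -scalemxAr.
by rewrite mulmxDr mulmx1 mulmxA mulmx_ker mul0mx addr0.
Qed.

Lemma pair_Em_ker_odd : odd n -> (kermx (F1 + F2) :=: kermx (G + 1%:M))%MS.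
Proof.
move=> n_odd; have G1 : G + 1%:M = - ((F1 + F2) *m F1).
  rewrite /pair_Gend n_odd expr1 scaleN1r mulmxDl -F_comm.
  by rewrite opprD addrCA [- 1%:M + _]addrC subrK opprD addrC.
rewrite G1; apply/eqmxP/andP; split; apply/sub_kermxP.
  by rewrite mulmxN mulmxA mulmx_ker mul0mx oppr0.
move: (mulmx_ker (- ((F1 + F2) *m F1))); rewrite mulmxN mulmxA => /eqP.
rewrite oppr_eq0 => /eqP; apply: (fstruct_im_ker0 F1_skew).
by apply: submx_trans (submxMl _ _) _; rewrite addmx_sub ?F2_sub_F1.
Qed.

Section EvenDimension.
Hypothesis n_even : ~~ odd n.

Lemma pair_Gend1_even : G + 1%:M = 1%:M - A + P.
Proof. by rewrite /pair_Gend (negbTE n_even) expr0 scale1r addrC addrA. Qed.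

Lemma fim_ker_pair_Gend k (u : 'M[R]_(k, N n)) : (u <= F1)%MS ->
  (u <= kermx (G + 1%:M))%MS = (u <= kermx (F1 + F2))%MS.
Proof.
move=> uF1; have uFF := fstruct_sqr_im F1_skew uF1.
have uP : u *m P = 0 by rewrite mulmxDr mulmx1 mulmxA uFF addrN.
have uG1 : u *m (G + 1%:M) = u - u *m A.
  by rewrite pair_Gend1_even mulmxDr uP addr0 mulmxBr mulmx1.
have e1 : (u - u *m A) *m F1 = u *m (F1 + F2).
  rewrite mulmxBl -(mulmxA u A) -(mulmxA F1 F2 F1) -F_comm !mulmxA uFF mulNmx opprK.
  by rewrite mulmxDr.
have e2 : u *m (F1 + F2) *m F1 = - (u - u *m A).
  by rewrite mulmxDr mulmxDl uFF -mulmxA -F_comm opprB addrC.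
apply/sub_kermxP/sub_kermxP => u0; first by rewrite -e1 -uG1 u0 mul0mx.
by rewrite uG1 -[LHS]opprK -e2 u0 mul0mx oppr0.
Qed.

Lemma ker_pair_Gend_sub_fim : (kermx (G + 1%:M) <= F1)%MS.
Proof.
set K := kermx _; have KG1 : K *m (G + 1%:M) = 0 by apply: mulmx_ker.
have KP : K *m P = 0.
  apply: eq_oppmx0; move: (congr1 (mulmx^~ P) KG1).
  rewrite /= mul0mx pair_Gend1_even -mulmxA mulmxDl mulmxBl mul1mx mulF12_fproj.
  by rewrite fproj_idem subr0 mulmxDr => /eqP; rewrite addr_eq0 => /eqP.
have KFF : K = - (K *m F1 *m F1).
  by apply/eqP; rewrite -addr_eq0 -mulmxA -{1}[K]mulmx1 -mulmxDr KP.
by rewrite {1}KFF eqmx_opp submxMl.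
Qed.

Lemma pair_Em_ker_even :
  (perp (kermx F1) :&: kermx (F1 + F2) :=: kermx (G + 1%:M))%MS.
Proof.
have Q_unit := Qmx_unit R n; have ker_sub := ker_pair_Gend_sub_fim.
apply/eqmxP/andP; split.
  have := capmxSl (perp (kermx F1)) (kermx (F1 + F2)).
  by rewrite (qperp_fstruct_ker Q_unit F1_skew) => CF; rewrite fim_ker_pair_Gend // capmxSr.
rewrite sub_capmx (qperp_fstruct_ker Q_unit F1_skew) ker_sub /=.
by rewrite -(fim_ker_pair_Gend ker_sub).
Qed.

End EvenDimension.

Lemma pair_Em_ker : (pair_Em :=: kermx (G + 1%:M))%MS.
Proof.
by rewrite /pair_Em; case: ifP => [/pair_Em_ker_odd | /negbT/pair_Em_ker_even].
Qed.

Lemma pair_Em_Gend : nondeg_on pair_Em Q /\ Gend pair_Em = G.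
Proof. exact: Gend_eigen pair_Gend_invol pair_Gend_sym pair_Em_ker. Qed.

Lemma pair_Em_metric :
    (if odd n then iso_on (kermx (F1 + F2)) (anchor R n)
     else iso_on (perp (kermx F1) :&: kermx (F1 + F2))%MS (anchor R n)) ->
  gen_metric pair_Em.
Proof.
move=> pair_iso; have [rkEA fullEA] : iso_on pair_Em (anchor R n).
  by rewrite /pair_Em; case: ifP pair_iso.
split; [|exact: pair_Em_Gend.1|by []].
by rewrite -rkEA; apply/eqP.
Qed.

Lemma pair_Em_unique (Em : 'M[R]_(N n)) :
  gen_metric Em -> F1 *m Gend Em = Gend Em *m F1 -> F1 *m Gend Em = F2 ->
  (Em == pair_Em)%MS.
Proof.
case=> Em_rank Em_nondeg _ F1_Gend F1_GendE.
have GendE : Gend Em = G.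
  apply: (row_full_adds_eq (fstruct_full F1_skew)); first by rewrite F1_GendE F1_pair_Gend.
  by rewrite (Gend_fker Em_nondeg Em_rank F1_skew F1_Gend) fker_pair_Gend.
apply/eqmxP; apply: eqmx_trans (Gend_ker Em_nondeg) _.
by rewrite GendE; apply: eqmx_sym; apply: pair_Em_ker.
Qed.

End PairToMetric.

Section Eigenvectors.
Variables (K : fieldType) (m : nat) (F Q : 'M[K]_m).

Lemma eigenspace_mul a : eigenspace F a *m F = a *: eigenspace F a.
Proof. by apply/eigenspaceP. Qed.

Lemma eigenspace0 : eigenspace F 0 = kermx F.
Proof. by rewrite /eigenspace raddf0 subr0. Qed.

Lemma eigenspace_cap0 a b : a != b -> (eigenspace F a :&: eigenspace F b)%MS = 0.
Proof.
move=> ab; apply/eqP; rewrite -submx0; apply/rV_subP => v.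
rewrite sub_capmx => /andP[/eigenspaceP va /eigenspaceP vb].
have : (a - b) *: v == 0 by rewrite scalerBl -va vb subrr.
by rewrite scalemx_eq0 subr_eq0 (negbTE ab) => /eqP ->; rewrite sub0mx.
Qed.

Lemma eigenspace_adds_cap0 a b c : a != b -> a != c -> b != c ->
  ((eigenspace F a + eigenspace F b) :&: eigenspace F c)%MS = 0.
Proof.
move=> ab ac bc; apply/eqP; rewrite -submx0; apply/rV_subP => v.
rewrite sub_capmx => /andP[/sub_addsmxP [[x y] /= ->] /eigenspaceP vF].
set u := x *m _ in vF *; set w := y *m _ in vF *.
have /eigenspaceP uF : (u <= eigenspace F a)%MS by apply: submxMl.
have /eigenspaceP wF : (w <= eigenspace F b)%MS by apply: submxMl.
have uw : (a - c) *: u = (c - b) *: w.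
  apply/eqP; rewrite -subr_eq0 !scalerBl opprB addrACA -opprD -scalerDr.
  by rewrite -uF -wF -mulmxDl vF subrr.
have uw0 : (a - c) *: u = 0.
  apply/eqP; rewrite -submx0 -(eigenspace_cap0 ab) sub_capmx.
  by rewrite {2}uw !scalemx_sub ?submxMl.
have u0 : u = 0 by apply/eqP; move/eqP: uw0; rewrite scalemx_eq0 subr_eq0 (negbTE ac).
have w0 : w = 0.
  by apply/eqP; move/eqP: uw0; rewrite uw scalemx_eq0 subr_eq0 eq_sym (negbTE bc).
by rewrite u0 w0 addr0 sub0mx.
Qed.

Lemma eigenspace_sub_im a : a != 0 -> (eigenspace F a <= F)%MS.
Proof.
move=> a0; apply/submxP; exists (a^-1 *: eigenspace F a).
by rewrite -scalemxAl eigenspace_mul scalerA mulVf ?scale1r.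
Qed.

Lemma eigen_fcube k (X : 'M[K]_(k, m)) a : X *m F = a *: X ->
  X *m (F *m F *m F + F) = (a * a * a + a) *: X.
Proof.
move=> XF; rewrite mulmxDr !mulmxA XF -!scalemxAl XF -scalemxAl XF !scalerA.
by rewrite scalerDl.
Qed.

Lemma eigen_skew_bil k l (X : 'M[K]_(k, m)) (Y : 'M[K]_(l, m)) a b :
  X *m F = a *: X -> Y *m F = b *: Y ->
  X *m (F *m Q + Q *m F^T) *m Y^T = (a + b) *: (X *m Q *m Y^T).
Proof.
move=> XF YF; rewrite mulmxDr mulmxDl !mulmxA XF -(mulmxA _ F^T) -trmx_mul YF.
by rewrite linearZ /= -scalemxAl -scalemxAr scalerDl -scalemxAl.
Qed.

Lemma eigen_orth k l (X : 'M[K]_(k, m)) (Y : 'M[K]_(l, m)) a b :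
  F *m Q = - (Q *m F^T) -> X *m F = a *: X -> Y *m F = b *: Y -> a + b != 0 ->
  X *m Q *m Y^T = 0.
Proof.
move=> FQ XF YF ab; have := eigen_skew_bil XF YF.
rewrite FQ addNr mulmx0 mul0mx => /esym/eqP.
by rewrite scalemx_eq0 (negbTE ab) => /eqP.
Qed.

End Eigenvectors.

Section Complexification.
Variable R : rcfType.
Local Notation I := (iC R).

Lemma cplxE m p (A : 'M[R]_(m, p)) : cplx A = map_mx (real_complex R) A.
Proof. by []. Qed.

Lemma cplxM m p q (A : 'M[R]_(m, p)) (B : 'M[R]_(p, q)) :
  cplx (A *m B) = cplx A *m cplx B.
Proof. by rewrite !cplxE map_mxM. Qed.

Lemma cplxN m p (A : 'M[R]_(m, p)) : cplx (- A) = - cplx A.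
Proof. by rewrite !cplxE map_mxN. Qed.

Lemma cplx_tr m p (A : 'M[R]_(m, p)) : cplx A^T = (cplx A)^T.
Proof. by rewrite !cplxE map_trmx. Qed.

Lemma cplx_inj m p : injective (@cplx R m p).
Proof. by move=> A B; rewrite !cplxE; apply: map_mx_inj. Qed.

Lemma mxrank_cplx m p (A : 'M[R]_(m, p)) : \rank (cplx A) = \rank A.
Proof. by rewrite cplxE mxrank_map. Qed.

Lemma conjmx_cplx m p (A : 'M[R]_(m, p)) : Defs.conjmx (cplx A) = cplx A.
Proof.
by rewrite /Defs.conjmx cplxE -map_mx_comp; apply: eq_map_mx => x /=; apply: conjc_real.
Qed.

Lemma mxrank_conjmx m p (A : 'M[R[i]]_(m, p)) : \rank (Defs.conjmx A) = \rank A.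
Proof. exact: mxrank_map. Qed.

Lemma sqr_iC : I * I = -1.
Proof. by rewrite -expr2 sqr_i. Qed.

Lemma iC_neq0 : I != 0.
Proof. by apply: contra_eq_neq sqr_iC => ->; rewrite mul0r eq_sym oppr_eq0 oner_eq0. Qed.

Lemma iC_neqN : I != - I.
Proof.
rewrite -subr_eq0 opprK -mulr2n -mulr_natr mulf_neq0 ?iC_neq0 //.
by rewrite pnatr_eq0.
Qed.

Lemma conjc_iC : conjc I = - I.
Proof. by rewrite /iC /conjc /=; congr Complex; rewrite oppr0. Qed.

Lemma conjmx_eigenspace m (F : 'M[R]_m) a :
  Defs.conjmx (eigenspace (cplx F) a) = eigenspace (cplx F) (conjc a).
Proof. by rewrite /Defs.conjmx map_eigenspace -/(Defs.conjmx _) conjmx_cplx. Qed.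

Lemma cplx_fstructE m (Q F : 'M[R]_m.+1) :
  skew_fstruct (cplx Q) (cplx F) <-> skew_fstruct Q F.
Proof.
split=> -[FQ FFF rkF].
  split; last by rewrite -mxrank_cplx.
    by apply: cplx_inj; rewrite cplxN !cplxM cplx_tr.
  by apply: cplx_inj; rewrite cplxN !cplxM.
by split; rewrite -?cplx_tr -?cplxM -?cplxN ?FQ ?FFF ?mxrank_cplx.
Qed.

End Complexification.

Lemma trmx_cplxQ (R : rcfType) n : (cplx (Qmx R n))^T = cplx (Qmx R n).
Proof. by rewrite -cplx_tr trmx_Qmx. Qed.

Lemma cplxQ_unit (R : rcfType) n : cplx (Qmx R n) \in unitmx.
Proof. by rewrite cplxE map_unitmx Qmx_unit. Qed.

Section FStructToBn.
Variables (R : rcfType) (n : nat).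
Local Notation Qc := (cplx (Qmx R n)).
Local Notation I := (iC R).
Variable F : 'M[R]_(N n).
Hypothesis F_skew : skew_fstruct (Qmx R n) F.
Local Notation Fc := (cplx F).
Local Notation L := (eigenspace Fc I).
Local Notation Lb := (Defs.conjmx L).

Let Fc_skew : skew_fstruct Qc Fc := (cplx_fstructE _ _).2 F_skew.

Lemma conjmx_eigenspace_iC : Lb = eigenspace Fc (- I).
Proof. by rewrite conjmx_eigenspace conjc_iC. Qed.

Lemma eigenspace_iC_orth : L *m Qc *m L^T = 0.
Proof.
case: Fc_skew => FcQ _ _; apply: eigen_orth FcQ (eigenspace_mul _ _) (eigenspace_mul _ _) _.
by rewrite addr_eq0 iC_neqN.
Qed.

Lemma eigenspace_iC_cap : (L :&: Lb)%MS = 0.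
Proof. by rewrite conjmx_eigenspace_iC eigenspace_cap0 ?iC_neqN. Qed.

Lemma eigenspaces_full : (1%:M <= (L + Lb) + kermx Fc)%MS.
Proof.
have FcFF := fstruct_cube Fc_skew.
have -> : 1%:M = - (Fc *m Fc) + (1%:M + Fc *m Fc) by rewrite addrCA addNr addr0.
apply: addmx_sub_adds; last exact/sub_kermxP/(fproj_mul Fc_skew).
have two_nz : (2%:R : R[i]) != 0 by rewrite pnatr_eq0.
rewrite eqmx_opp -(eqmx_scale _ two_nz).
have -> : 2 *: (Fc *m Fc) = (Fc *m Fc + I *: Fc) + (Fc *m Fc - I *: Fc).
  by rewrite addrACA subrr addr0 -[2]/(1 + 1) scalerDl scale1r.
rewrite conjmx_eigenspace_iC; apply: addmx_sub_adds; apply/eigenspaceP.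
  by rewrite mulmxDl -scalemxAl FcFF scalerDr scalerA sqr_iC scaleN1r addrC.
by rewrite mulmxBl -scalemxAl FcFF scalerBr scalerA mulNr sqr_iC opprK scale1r scaleNr addrC.
Qed.

Lemma mxrank_eigenspace_iC : \rank L = n.
Proof.
have rk_adds : \rank (L + Lb)%MS = (\rank L + \rank L)%N.
  by rewrite mxrank_disjoint_sum ?eigenspace_iC_cap // mxrank_conjmx.
have : (\rank (L + Lb)%MS <= n + n)%N.
  case: Fc_skew => _ _ <-; apply: mxrankS.
  rewrite conjmx_eigenspace_iC addsmx_sub; apply/andP; split; apply: eigenspace_sub_im.
    exact: iC_neq0.
  by rewrite oppr_eq0; apply: iC_neq0.
have : ((n + n).+1 <= \rank (L + Lb)%MS + 1)%N.
  rewrite -(mxrank_fstruct_ker Fc_skew); apply: leq_trans (mxrank_adds_leqif _ _).1.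
  by have := mxrankS eigenspaces_full; rewrite mxrank1.
rewrite rk_adds; lia.
Qed.

Lemma perp_eigenspaces_fker : kermx (Qc *m (L + Lb)%MS^T) *m Fc = 0.
Proof.
have Qc_unit := cplxQ_unit R n.
case: Fc_skew => FcQ _ _.
have KF : kermx Fc *m Fc = 0 *: kermx Fc by rewrite mulmx_ker scale0r.
have ker_perp : (kermx Fc <= qperp Qc (L + Lb)%MS)%MS.
  rewrite sub_qperp; apply/eqP; apply: addsmx_bil0r; apply: (eigen_orth FcQ KF).
  - exact: eigenspace_mul.
  - by rewrite add0r; apply: iC_neq0.
  - by rewrite conjmx_eigenspace_iC; apply: eigenspace_mul.
  - by rewrite add0r oppr_eq0; apply: iC_neq0.
have : (kermx Fc == qperp Qc (L + Lb)%MS)%MS.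
  rewrite -(mxrank_leqif_eq ker_perp).2 mxrank_qperp // (mxrank_fstruct_ker Fc_skew).
  rewrite mxrank_disjoint_sum ?eigenspace_iC_cap // mxrank_conjmx mxrank_eigenspace_iC.
  by rewrite subSnn.
by case/andP => _ /sub_kermxP.
Qed.

End FStructToBn.

Lemma fstruct_BnGACS (R : rcfType) (n : nat) (F : 'M[R]_(N n)) :
  skew_fstruct (Qmx R n) F -> BnGACS F.
Proof.
move=> F_skew; rewrite /BnGACS; cbv zeta; split.
- exact: eigenspace_iC_orth.
- exact: mxrank_eigenspace_iC.
- by apply/eqmx0P; apply: eigenspace_iC_cap.
- by rewrite conjmx_eigenspace_iC; apply/eqmxP.
- exact: perp_eigenspaces_fker.
Qed.

Section BnToFStruct.
Variables (R : rcfType) (n : nat).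
Local Notation Qc := (cplx (Qmx R n)).
Local Notation I := (iC R).
Variable F : 'M[R]_(N n).
Local Notation Fc := (cplx F).
Local Notation L := (eigenspace Fc I).
Local Notation Lb := (Defs.conjmx L).
Hypotheses (L_orth : L *m Qc *m L^T = 0) (L_rank : \rank L = n).
Hypotheses (L_cap : (L :&: Lb == (0 : 'M[R[i]]_(N n)))%MS).
Hypothesis Lb_eigen : (eigenspace Fc (- I) == Lb)%MS.
Hypothesis perp_ker : kermx (Qc *m (L + Lb)%MS^T) *m Fc = 0.

Lemma conjmx_eigenspace_mul : Lb *m Fc = - I *: Lb.
Proof. by apply/eigenspaceP; case/andP: Lb_eigen. Qed.

Lemma conjmx_eigenspace_orth : Lb *m Qc *m Lb^T = 0.
Proof.
rewrite /Defs.conjmx map_trmx -(conjmx_cplx (Qmx R n)) /Defs.conjmx -!map_mxM.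
by rewrite L_orth map_mx0.
Qed.

Lemma mxrank_eigenspaces : \rank (L + Lb)%MS = (n + n)%N.
Proof. by rewrite mxrank_disjoint_sum ?(eqmx0P L_cap) // mxrank_conjmx L_rank. Qed.

Lemma eigenspaces_capmx_ker : ((L + Lb) :&: kermx Fc)%MS = 0.
Proof.
have oppI0 : - I != 0 by rewrite oppr_eq0; apply: iC_neq0.
have cap0 := eigenspace_adds_cap0 Fc (iC_neqN R) (iC_neq0 R) oppI0.
apply/eqP; rewrite -submx0 -cap0 eigenspace0 capmxS // addsmxS //.
by case/andP: Lb_eigen.
Qed.

Lemma ker_perp_eigenspaces : (kermx Fc :=: qperp Qc (L + Lb)%MS)%MS.
Proof.
have Qc_unit := cplxQ_unit R n.
have perp_sub : (qperp Qc (L + Lb)%MS <= kermx Fc)%MS by apply/sub_kermxP.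
have rk_perp : \rank (qperp Qc (L + Lb)%MS) = 1%N.
  by rewrite mxrank_qperp // mxrank_eigenspaces subSnn.
have rk_ker : \rank (kermx Fc) = 1%N.
  have := rank_leq_col ((L + Lb) + kermx Fc)%MS.
  rewrite mxrank_disjoint_sum ?eigenspaces_capmx_ker // mxrank_eigenspaces.
  have := mxrankS perp_sub; rewrite rk_perp /N; lia.
by apply: eqmx_sym; apply/eqmxP; rewrite -(mxrank_leqif_eq perp_sub).2 rk_perp rk_ker.
Qed.

Lemma ker_eigenspaces_orth k (X : 'M[R[i]]_(k, N n)) :
  (X <= L + Lb)%MS -> kermx Fc *m Qc *m X^T = 0.
Proof.
case/submxP=> D ->; rewrite trmx_mul mulmxA.
have /eqP -> : kermx Fc *m Qc *m (L + Lb)%MS^T == 0.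
  by rewrite -sub_qperp ker_perp_eigenspaces submx_refl.
by rewrite mul0mx.
Qed.

Lemma mxrank_ker_Bn : \rank (kermx Fc) = 1%N.
Proof.
by rewrite ker_perp_eigenspaces mxrank_qperp ?cplxQ_unit // mxrank_eigenspaces subSnn.
Qed.

Lemma eigenspaces_ker_full : (1%:M <= (L + Lb) + kermx Fc)%MS.
Proof.
rewrite sub1mx /row_full mxrank_disjoint_sum ?eigenspaces_capmx_ker //.
by rewrite mxrank_eigenspaces mxrank_ker_Bn addn1.
Qed.

Lemma eigenspaces_fcube : Fc *m Fc *m Fc = - Fc.
Proof.
have KF : kermx Fc *m Fc = 0 *: kermx Fc by rewrite mulmx_ker scale0r.
apply/eqP; rewrite -addr_eq0; apply/eqP.
apply: (row_full_adds_eq eigenspaces_ker_full); rewrite mulmx0.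
  apply: addsmx_mul0.
    by rewrite (eigen_fcube (eigenspace_mul _ _)) sqr_iC mulN1r addNr scale0r.
  by rewrite (eigen_fcube conjmx_eigenspace_mul) mulrNN sqr_iC mulN1r opprK addrN scale0r.
by rewrite (eigen_fcube KF) !mul0r addr0 scale0r.
Qed.

Lemma eigenspaces_skew : Fc *m Qc = - (Qc *m Fc^T).
Proof.
have Qc_sym := trmx_cplxQ R n.
have LF := eigenspace_mul Fc I; have LbF := conjmx_eigenspace_mul.
have KF : kermx Fc *m Fc = 0 *: kermx Fc by rewrite mulmx_ker scale0r.
have KL := ker_eigenspaces_orth (addsmxSl L Lb).
have KLb := ker_eigenspaces_orth (addsmxSr L Lb).
have skew0 k l (X : 'M_(k, N n)) (Y : 'M_(l, N n)) a b :
    X *m Fc = a *: X -> Y *m Fc = b *: Y -> a + b = 0 \/ X *m Qc *m Y^T = 0 ->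
    X *m (Fc *m Qc + Qc *m Fc^T) *m Y^T = 0.
  by move=> XF YF [ab0|XY0]; rewrite (eigen_skew_bil _ XF YF) ?ab0 ?XY0 ?scale0r ?scaler0.
apply/eqP; rewrite -addr_eq0; apply/eqP; apply: (row_full_bil0 eigenspaces_ker_full).
apply: addsmx_bil0l; [apply: addsmx_bil0l|]; (apply: addsmx_bil0r; [apply: addsmx_bil0r|]).
- exact: (skew0 _ _ _ _ _ _ LF LF (or_intror L_orth)).
- exact: (skew0 _ _ _ _ _ _ LF LbF (or_introl (subrr I))).
- exact: (skew0 _ _ _ _ _ _ LF KF (or_intror (bil_sym0 Qc_sym KL))).
- exact: (skew0 _ _ _ _ _ _ LbF LF (or_introl (addNr I))).
- exact: (skew0 _ _ _ _ _ _ LbF LbF (or_intror conjmx_eigenspace_orth)).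
- exact: (skew0 _ _ _ _ _ _ LbF KF (or_intror (bil_sym0 Qc_sym KLb))).
- exact: (skew0 _ _ _ _ _ _ KF LF (or_intror KL)).
- exact: (skew0 _ _ _ _ _ _ KF LbF (or_intror KLb)).
- exact: (skew0 _ _ _ _ _ _ KF KF (or_introl (addr0 0))).
Qed.

Lemma mxrank_Bn : \rank Fc = (n + n)%N.
Proof.
by have := mxrank_ker Fc; rewrite mxrank_ker_Bn; have := rank_leq_row Fc; rewrite /N; lia.
Qed.

End BnToFStruct.

Lemma BnGACS_fstruct (R : rcfType) (n : nat) (F : 'M[R]_(N n)) :
  BnGACS F -> skew_fstruct (Qmx R n) F.
Proof.
rewrite /BnGACS; cbv zeta => -[L_orth L_rank L_cap Lb_eigen perp_ker].
apply/cplx_fstructE; split.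
- exact: eigenspaces_skew.
- exact: eigenspaces_fcube.
- exact: mxrank_Bn.
Qed.

Theorem proposition3p3 (R : rcfType) (n : nat) :
  (forall Em F : 'M[R]_(N n),
     pseudo_hermitian Em F -> admissible_pair F (F *m Gend Em))
  /\
  (forall F1 F2 : 'M[R]_(N n),
     admissible_pair F1 F2 ->
     exists Em : 'M[R]_(N n),
       [/\ pseudo_hermitian Em F1, F1 *m Gend Em = F2
         & forall Em' : 'M[R]_(N n),
             pseudo_hermitian Em' F1 -> F1 *m Gend Em' = F2 -> (Em' == Em)%MS]).
Proof.
split.
  move=> Em F [[Em_rank Em_nondeg Em_iso] /BnGACS_fstruct F_skew F_Gend].
  split.
  - by split; apply: fstruct_BnGACS => //; apply: fstruct_mulGend.
  - by rewrite -mulmxA -F_Gend.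
  - exact: kermx_mulGend.
  - exact: nondeg_mulGend.
  - exact: iso_mulGend.
move=> F1 F2 [[/BnGACS_fstruct F1_skew /BnGACS_fstruct F2_skew] F_comm ker_eq _ pair_iso].
have [_ GendE] := pair_Em_Gend F1_skew F2_skew F_comm ker_eq.
exists (pair_Em F1 F2); split.
- split; [exact: pair_Em_metric | exact: fstruct_BnGACS |].
  by rewrite GendE F1_pair_Gend // pair_Gend_F1.
- by rewrite GendE F1_pair_Gend.
- by move=> Em [Em_metric _ F1_Gend] F1_GendE; apply: pair_Em_unique.
Qed.
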